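(* Under any parsimonious protocol $\Pi$, for each state of nature $\theta$ it is a best response for the sender never to stop at any transient memory state, i.e., to keep sending signals until the memory state reaches one of the two absorbing states, where the game ends and the receiver acts.
   Context: Setting. The state of nature is $\theta\in\Theta=\{H,L\}$ with prior $\Pr(\theta=H)=p\in(0,1)$. A sender privately observes $\theta$; a receiver does not. $S$ is a finite signal set; conditional on $\theta$, signals are i.i.d. with distribution $\pi_\theta$ on $S$, where $\pi_\theta(s)>0$ for all $s\in S,\theta\in\Theta$, and $\pi_H\neq\pi_L$. The receiver has a finite set of memory states $M$ and chooses a protocol $\Pi=(f,g,a)$: a transition function $f:M\times S\to\Delta(M)$ ($f(i,s)(j)$ is the probability of moving from memory state $i$ to $j$ after signal $s$), an initial distribution $g\in\Delta(M)$ of $m_0$, and an action rule $a:M\to[0,1]$ (probability of action $H$ if the game ends in that memory state). A sender strategy is $\sigma:M\times\Theta\to[0,1]$, the probability of stopping in the current memory state given $\theta$. Timing: $m_0\sim g$; in each period $t=0,1,\dots$, with current memory state $m_t$, the game ends if $m_t$ is absorbing ($f(m_t,s)(m_t)=1$ for all $s$); otherwise the sender stops with probability $\sigma(m_t,\theta)$, ending the game; if not stopped, a signal $s_t\sim\pi_\theta$ is generated and $m_{t+1}\sim f(m_t,s_t)$. When the game ends in state $m_t$ the receiver takes action $H$ with probability $a(m_t)$ and $L$ otherwise. The sender's payoff is $1$ if the action is $H$ and $0$ otherwise; there is no discounting; if the game never ends she gets $0$. Since $\pi_\theta$ has full support, which transitions have positive probability does not depend on $\theta$; absorbing/transient refer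 to the Markov chain on $M$ induced by $f$ with signals from $\pi_\theta$. A protocol is parsimonious if (i) it has exactly two absorbing memory states, one in which $a=0$ and one in which $a=1$, and (ii) all other memory states are transient with $a=0$. *)

From HB Require Import structures.
From mathcomp Require Import all_boot all_order all_algebra.
From mathcomp Require Import all_classical all_reals all_analysis.
Set Implicit Arguments. Unset Strict Implicit. Unset Printing Implicit Defensive.
Import Order.TTheory GRing.Theory Num.Theory.
Local Open Scope ring_scope.

Inductive Theta := TH | TL.

Section Game.
Variables (R : realType) (M S : finType).

(* signal distributions pi theta s; transition f i s j; initial g; action a *)
Definition is_dist (d : M -> R) := (forall j, 0 <= d j) /\ \sum_j d j = 1.

Definition signal_dists (pi : Theta -> S -> R) :=
  forall th, (forall s, 0 < pi th s) /\ \sum_s pi th s = 1.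

Definition transition_ok (f : M -> S -> M -> R) :=
  forall i s, is_dist (f i s).

Definition absorbing (f : M -> S -> M -> R) (m : M) : bool :=
  [forall s, f m s m == 1].

Definition Pmat (f : M -> S -> M -> R) (pi : Theta -> S -> R) th (i j : M) : R :=
  \sum_s pi th s * f i s j.

(* taboo probabilities: first_hit f pi th m n j = probability, starting from j,
   that the chain visits m for the first time (after time 0) at time n+1 *)
Fixpoint first_hit (f : M -> S -> M -> R) (pi : Theta -> S -> R) th (m : M)
    (n : nat) (j : M) : R :=
  match n with
  | 0 => Pmat f pi th j m
  | n'.+1 => \sum_(k | k != m) Pmat f pi th j k * first_hit f pi th m n' k
  end.

Definition transient (f : M -> S -> M -> R) (pi : Theta -> S -> R) th (m : M) : Prop :=
  (\sum_(0 <= n <oo) (first_hit f pi th m n m)%:E < 1)%E.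

Definition parsimonious (f : M -> S -> M -> R) (pi : Theta -> S -> R)
    (a : M -> R) : Prop :=
  exists m0 m1 : M,
    m0 <> m1 /\ absorbing f m0 /\ absorbing f m1 /\ a m0 = 0 /\ a m1 = 1 /\
    (forall m, absorbing f m -> m = m0 \/ m = m1) /\
    (forall m, m <> m0 -> m <> m1 ->
       (forall th, transient f pi th m) /\ a m = 0).

(* sender strategies: probability of stopping *)
Definition strategy_ok (sigma : M -> Theta -> R) :=
  forall m th, 0 <= sigma m th <= 1.

(* alive f pi g sigma th t m : probability that the game has not ended before
   period t and the memory state at period t is m *)
Fixpoint alive (f : M -> S -> M -> R) (pi : Theta -> S -> R) (g : M -> R)
    (sigma : M -> Theta -> R) th (t : nat) (j : M) : R :=
  match t with
  | 0 => g j
  | t'.+1 => \sum_m alive f pi g sigma th t' m *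
               (if absorbing f m then 0 else 1 - sigma m th) *
               Pmat f pi th m j
  end.

(* probability that the game ends in period t with action H *)
Definition gain_at (f : M -> S -> M -> R) (pi : Theta -> S -> R) (g : M -> R)
    (a : M -> R) (sigma : M -> Theta -> R) th (t : nat) : R :=
  \sum_m alive f pi g sigma th t m *
    (if absorbing f m then 1 else sigma m th) * a m.

(* sender's expected payoff = probability of action H (0 if game never ends) *)
Definition payoff (f : M -> S -> M -> R) (pi : Theta -> S -> R) (g : M -> R)
    (a : M -> R) (sigma : M -> Theta -> R) th : \bar R :=
  (\sum_(0 <= t <oo) (gain_at f pi g a sigma th t)%:E)%E.

End Game.

From HB Require Import structures.
From mathcomp Require Import all_boot all_order all_algebra.
From mathcomp Require Import all_classical all_reals all_analysis.
Import Order.TTheory GRing.Theory Num.Theory.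
Set Implicit Arguments. Unset Strict Implicit. Unset Printing Implicit Defensive.
Local Open Scope ring_scope.

(* Under a parsimonious protocol the receiver plays H only in the absorbing
   state m1, so the sender's payoff is the total probability mass that reaches
   absorbing states.  Stopping less often at transient states can only keep
   more mass alive in every period, hence the strategy that never stops at a
   transient state dominates every other strategy period by period. *)

Section StoppingComparison.
Variables (R : realType) (M S : finType).
Variables (pi : Theta -> S -> R) (f : M -> S -> M -> R) (g : M -> R).
Variables (a : M -> R) (th : Theta).

Lemma Pmat_ge0 : signal_dists pi -> transition_ok f ->
  forall i j, 0 <= Pmat f pi th i j.
Proof.
move=> hpi hf i j; apply: sumr_ge0 => s _; apply: mulr_ge0.
  exact/ltW/((hpi th).1 s).
exact: (hf i s).1.
Qed.

Hypotheses (hpi : signal_dists pi) (hf : transition_ok f) (hg : is_dist g).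

Lemma alive_ge0 (sigma : M -> Theta -> R) : strategy_ok sigma ->
  forall t j, 0 <= alive f pi g sigma th t j.
Proof.
move=> hsigma; elim=> [|t IH] j /=; first exact: hg.1.
apply: sumr_ge0 => m _; rewrite mulr_ge0 ?Pmat_ge0 ?mulr_ge0 //.
by case: absorbing; rewrite // subr_ge0; case/andP: (hsigma m th).
Qed.

Lemma alive_le_stop_less (sigma sigma' : M -> Theta -> R) :
  strategy_ok sigma ->
  (forall m, ~~ absorbing f m -> sigma' m th <= sigma m th) ->
  forall t j, alive f pi g sigma th t j <= alive f pi g sigma' th t j.
Proof.
move=> hsigma hless; elim=> [|t IH] j //=.
apply: ler_sum => m _; apply: ler_wpM2r; first exact: Pmat_ge0.
case: (boolP (absorbing f m)) => hm; rewrite ?mulr0 //.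
apply: ler_pM; rewrite ?IH ?alive_ge0 ?lerB ?hless //.
by rewrite subr_ge0; case/andP: (hsigma m th).
Qed.

Hypotheses (ha_ge0 : forall m, 0 <= a m)
           (ha_transient : forall m, ~~ absorbing f m -> a m = 0).

Lemma gain_at_ge0 (sigma : M -> Theta -> R) : strategy_ok sigma ->
  forall t, 0 <= gain_at f pi g a sigma th t.
Proof.
move=> hsigma t; apply: sumr_ge0 => m _.
rewrite mulr_ge0 ?mulr_ge0 ?alive_ge0 ?ha_ge0 //.
by case: absorbing => //; case/andP: (hsigma m th).
Qed.

Lemma gain_at_le_stop_less (sigma sigma' : M -> Theta -> R) :
  strategy_ok sigma ->
  (forall m, ~~ absorbing f m -> sigma' m th <= sigma m th) ->
  forall t, gain_at f pi g a sigma th t <= gain_at f pi g a sigma' th t.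
Proof.
move=> hsigma hless t; apply: ler_sum => m _.
case: (boolP (absorbing f m)) => hm; last by rewrite ha_transient ?mulr0.
by rewrite !mulr1 ler_wpM2r ?alive_le_stop_less ?ha_ge0.
Qed.

Lemma payoff_le_stop_less (sigma sigma' : M -> Theta -> R) :
  strategy_ok sigma ->
  (forall m, ~~ absorbing f m -> sigma' m th <= sigma m th) ->
  (payoff f pi g a sigma th <= payoff f pi g a sigma' th)%E.
Proof.
move=> hsigma hless; apply: lee_nneseries => t _.
  by rewrite lee_fin gain_at_ge0.
by rewrite lee_fin gain_at_le_stop_less.
Qed.

End StoppingComparison.

Lemma parsimonious_non_absorbing (R : realType) (M S : finType)
    (pi : Theta -> S -> R) (f : M -> S -> M -> R) (a : M -> R) (m : M) :
  parsimonious f pi a -> ~~ absorbing f m ->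
  (forall th, transient f pi th m) /\ a m = 0.
Proof.
case=> m0 [m1 [_ [ab0 [ab1 [_ [_ [_ htr]]]]]]] hm.
by apply: htr => em; rewrite em ?ab0 ?ab1 in hm.
Qed.

Theorem lemma3 (R : realType) (M S : finType)
    (pi : Theta -> S -> R) (f : M -> S -> M -> R) (g : M -> R) (a : M -> R) :
  signal_dists pi -> pi TH <> pi TL ->
  transition_ok f -> is_dist g -> (forall m, 0 <= a m <= 1) ->
  parsimonious f pi a ->
  forall (th : Theta) (sigma_star : M -> Theta -> R),
    strategy_ok sigma_star ->
    (forall m, transient f pi th m -> sigma_star m th = 0) ->
    forall sigma : M -> Theta -> R, strategy_ok sigma ->
      (payoff f pi g a sigma th <= payoff f pi g a sigma_star th)%E.
Proof.
move=> hpi _ hf hg ha hpars th sigma_star _ hstar sigma hsigma.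
apply: payoff_le_stop_less => // [m | m hm | m hm].
- by case/andP: (ha m).
- exact: (parsimonious_non_absorbing hpars hm).2.
- rewrite hstar; first by case/andP: (hsigma m th).
  exact: (parsimonious_non_absorbing hpars hm).1.
Qed.
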